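(* There exist real numbers $F_0,F_1,\dots,F_{2n}$ such that for every density operator $\rho$ on $\mathcal{H}_n\otimes\mathcal{H}_n$ whose range is contained in $\mathcal{K}$ (in particular $\mathrm{Tr}\rho=1$), $$\sum_{a\in\{0,1\}^{2n},\,|a|=k}\rho_{aa}=F_k\qquad k=0,1,\dots,2n.$$
   Context: $\mathcal{H}_n$ is the Fock space of $n$ fermionic modes with Majorana operators $c_1,\dots,c_{2n}$ ($c_{2j-1}=a_j+a_j^\dagger$, $c_{2j}=-i(a_j-a_j^\dagger)$). For $x\in\{0,1\}^{2n}$ let $c(x)=c_1^{x_1}\cdots c_{2n}^{x_{2n}}$ and $|x|$ its Hamming weight. Every operator $\rho$ on $\mathcal{H}_n\otimes\mathcal{H}_n$ (ordinary tensor product) expands uniquely as $\rho=\sum_{a,b\in\{0,1\}^{2n}}\rho_{ab}\,c(a)\otimes c(b)$ with $\rho_{ab}=2^{-2n}\mathrm{Tr}(\rho\,c(a)\otimes c(b))$. Let $\Lambda=\sum_{p=1}^{2n}c_p\otimes c_p$ and $\mathcal{K}=\ker\Lambda$. *)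

(* Complex scalars: an arbitrary numClosedFieldType C
   (e.g. algC, or complex R over a real closed field). *)
From HB Require Import structures.
From mathcomp Require Import all_boot all_order all_algebra.
From mathcomp Require Export mxtens.
Set Implicit Arguments. Unset Strict Implicit. Unset Printing Implicit Defensive.
Import Order.TTheory GRing.Theory Num.Theory.
Local Open Scope ring_scope.

(* Fock space H_n of n fermionic modes: C^(2^n), basis vector |x> for
   x < 2^n, the occupation of mode j (0-indexed) being bit j of x. *)
Definition occ (x j : nat) : bool := odd (x %/ 2 ^ j).

Definition adjmx (C : numClosedFieldType) m n (A : 'M[C]_(m, n)) : 'M[C]_(n, m) :=
  \matrix_(i, j) (A j i)^*.

(* Annihilation operator a_j (mode j, 0-indexed), Jordan-Wigner form:
   a_j |x> = (-1)^(sum_{k<j} x_k) |x - e_j> if x_j = 1, and 0 otherwise. *)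
Definition ann (C : numClosedFieldType) (n j : nat) : 'M[C]_(2 ^ n) :=
  \matrix_(y, x)
    (if occ x j && (y == (x - 2 ^ j)%N :> nat)
     then (-1) ^+ (\sum_(k < j) occ x k)%N else 0).

(* Majorana operators, 0-indexed: for p = 2j (i.e. c_{2j+1} 1-indexed)
   c = a_j + a_j^dag ; for p = 2j+1 (c_{2j+2}) c = -i (a_j - a_j^dag). *)
Definition majorana (C : numClosedFieldType) (n : nat) (p : 'I_(2 * n)) : 'M[C]_(2 ^ n) :=
  let a := @ann C n p./2 in
  if ~~ odd p then a + adjmx a else - 'i *: (a - adjmx a).

Definition cmono (C : numClosedFieldType) (n : nat) (x : {ffun 'I_(2 * n) -> bool})
  : 'M[C]_(2 ^ n) :=
  \prod_(p < 2 * n) (if x p then @majorana C n p else 1).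

Definition hweight n (x : {ffun 'I_(2 * n) -> bool}) : nat := #|[pred p | x p]|.

Definition rho_coef (C : numClosedFieldType) (n : nat) (rho : 'M[C]_(2 ^ n * 2 ^ n))
  (a b : {ffun 'I_(2 * n) -> bool}) : C :=
  (2 ^+ (2 * n))^-1 * \tr (rho *m (@cmono C n a *t @cmono C n b)).

Definition Lambda (C : numClosedFieldType) (n : nat) : 'M[C]_(2 ^ n * 2 ^ n) :=
  \sum_(p < 2 * n) (@majorana C n p *t @majorana C n p).

Definition density (C : numClosedFieldType) N (rho : 'M[C]_N) : Prop :=
  [/\ adjmx rho = rho,
      forall v : 'cV[C]_N, 0 <= (adjmx v *m rho *m v) ord0 ord0
    & \tr rho = 1].

(* range(rho) is contained in K = ker Lambda. *)
Definition range_in_kerLambda (C : numClosedFieldType) (n : nat)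
  (rho : 'M[C]_(2 ^ n * 2 ^ n)) : Prop :=
  forall v : 'cV[C]_(2 ^ n * 2 ^ n), @Lambda C n *m (rho *m v) = 0.

(* Write X_p = c_p (x) c_p.  Since the Majorana operators anticommute and square
   to 1, the X_p are pairwise commuting involutions with sum Lambda, and
   c(a) (x) c(a) is the product of the X_p with a_p = 1; so the sum of the
   c(a) (x) c(a) over |a| = k is the k-th elementary symmetric polynomial e_k in
   the X_p.  For commuting involutions Lambda e_k = (k+1) e_(k+1) + (2n-k+1) e_(k-1),
   hence e_k rho = f_k rho whenever Lambda rho = 0, where f_k is the coefficient
   of t^k in (1 - t^2)^n (on ker Lambda, n of the X_p are +1 and n are -1).
   Taking traces, the sum of the rho_aa over |a| = k is 2^(-2n) f_k tr rho; only
   tr rho = 1 is needed, not the positivity of rho. *)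

From HB Require Import structures.
From mathcomp Require Import all_boot all_order all_algebra.
From mathcomp Require Import zify ring.

Set Implicit Arguments.
Unset Strict Implicit.
Unset Printing Implicit Defensive.

Import Order.TTheory GRing.Theory Num.Theory.

Lemma occ_addX x j : occ (x + 2 ^ j) j = ~~ occ x j.
Proof. by rewrite /occ divnDr ?dvdnn // divnn expn_gt0 addn1. Qed.

Lemma occ_addX_neq x i j : i != j -> ~~ occ x j -> occ (x + 2 ^ j) i = occ x i.
Proof.
rewrite /occ => neq_ij xj0.
case: (ltngtP i j) => [lt_ij|lt_ji|eq_ij]; last by rewrite eq_ij eqxx in neq_ij.
  have -> : 2 ^ j = 2 ^ (j - i) * 2 ^ i by rewrite -expnD subnK // ltnW.
  by rewrite divnDMl ?expn_gt0 // oddD oddX subn_eq0 leqNgt lt_ij addbF.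
have -> : 2 ^ i = 2 ^ j * (2 * 2 ^ (i - j).-1).
  by rewrite -expnS prednK ?subn_gt0 // -expnD subnKC // ltnW.
rewrite !divnMA -{1}[2 ^ j]mul1n divnDMl ?expn_gt0 //.
move: xj0; set u := x %/ 2 ^ j => u_even; congr (odd (_ %/ _)).
by rewrite -[u]odd_double_half (negbTE u_even) add0n -muln2 divnMDl // mulnK // addn0.
Qed.

Lemma occ_geX x j : occ x j -> 2 ^ j <= x.
Proof. by rewrite /occ; case: leqP => // lt_x; rewrite divn_small. Qed.
Arguments occ_geX {x j}.

Lemma occ_addX_ltn n x j : j < n -> x < 2 ^ n -> ~~ occ x j -> x + 2 ^ j < 2 ^ n.
Proof.
rewrite /occ => lt_jn lt_x xj0.
have def2n : 2 ^ n = 2 ^ (n - j) * 2 ^ j by rewrite -expnD subnK // ltnW.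
have lt_u : x %/ 2 ^ j < 2 ^ (n - j) by rewrite ltn_divLR ?expn_gt0 // -def2n.
have lt_u1 : (x %/ 2 ^ j).+1 < 2 ^ (n - j).
  rewrite ltn_neqAle lt_u andbT; apply: contraNneq xj0 => /(congr1 odd) /=.
  by rewrite oddX subn_eq0 leqNgt lt_jn => /negbFE.
have lt_r := ltn_pmod x (expn_gt0 2 j).
rewrite {1}(divn_eq x (2 ^ j)) def2n; nia.
Qed.

Lemma occ_subX x j : occ x j -> ~~ occ (x - 2 ^ j) j.
Proof. by move=> xj; rewrite -occ_addX subnK ?occ_geX. Qed.

Lemma occ_subX_neq x i j : i != j -> occ x j -> occ (x - 2 ^ j) i = occ x i.
Proof.
by move=> neq_ij xj; rewrite -[in RHS](subnK (occ_geX xj)) occ_addX_neq ?occ_subX.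
Qed.

Lemma occ_subX_addX x y j :
  (occ y j && (x == y - 2 ^ j)) = (~~ occ x j && (y == x + 2 ^ j)).
Proof.
apply/andP/andP => [[yj /eqP ->]|[xj0 /eqP ->]].
  by rewrite occ_subX // subnK ?occ_geX.
by rewrite occ_addX xj0 addnK.
Qed.

Definition occ_below j x := \sum_(k < j) occ x k.

Lemma occ_below_addX_le x j m :
  ~~ occ x m -> j <= m -> occ_below j (x + 2 ^ m) = occ_below j x.
Proof.
move=> xm0 le_jm; apply: eq_bigr => k _; rewrite occ_addX_neq //.
by rewrite neq_ltn (leq_trans (ltn_ord k) le_jm).
Qed.

Lemma occ_below_addX_gt x j m :
  ~~ occ x m -> m < j -> occ_below j (x + 2 ^ m) = (occ_below j x).+1.
Proof.
move=> xm0 lt_mj; rewrite /occ_below (bigD1 (Ordinal lt_mj)) //= occ_addX xm0 /=.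
rewrite [in RHS](bigD1 (Ordinal lt_mj)) //= (negbTE xm0) add1n add0n; congr _.+1.
by apply: eq_bigr => k neq_km; rewrite occ_addX_neq.
Qed.

Lemma occ_below_subX_le x j m :
  occ x m -> j <= m -> occ_below j (x - 2 ^ m) = occ_below j x.
Proof.
move=> xm le_jm.
by rewrite -[in RHS](subnK (occ_geX xm)) occ_below_addX_le ?occ_subX.
Qed.

Lemma occ_below_subX_gt x j m :
  occ x m -> m < j -> occ_below j x = (occ_below j (x - 2 ^ m)).+1.
Proof.
move=> xm lt_mj.
by rewrite -[in LHS](subnK (occ_geX xm)) occ_below_addX_gt ?occ_subX.
Qed.

Local Open Scope ring_scope.

Section GraphMatrix.
Variables (R : pzRingType) (N : nat).

Definition graph_mx (P : pred nat) (h : nat -> nat) (s : nat -> R) : 'M[R]_N :=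
  \matrix_(y, x) if P x && (y == h x :> nat) then s x else 0.

Lemma mul_graph_mx (P1 P2 : pred nat) (h1 h2 : nat -> nat) (s1 s2 : nat -> R)
    (y x : 'I_N) :
  (forall x : 'I_N, P2 x -> (h2 x < N)%N) ->
  (graph_mx P1 h1 s1 *m graph_mx P2 h2 s2) y x =
  if P2 x && P1 (h2 x) && (y == h1 (h2 x) :> nat) then s1 (h2 x) * s2 x else 0.
Proof.
move=> h2_lt; rewrite mxE.
case P2x: (P2 x) => /=; last by rewrite big1 // => z _; rewrite !mxE P2x mulr0.
rewrite (bigD1 (Ordinal (h2_lt x P2x))) //= big1 ?addr0 => [|z neq_z].
  by rewrite !mxE /= eqxx P2x; case: (_ && _); rewrite ?mul0r.
rewrite !mxE P2x; suff -> : (z == h2 x :> nat) = false by rewrite mulr0.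
by apply: contraNF neq_z => /eqP eq_z; apply/eqP/val_inj.
Qed.

End GraphMatrix.
Arguments graph_mx {R N}.

Section Adjoint.
Variable C : numClosedFieldType.

Lemma adjmxM m k l (A : 'M[C]_(m, k)) (B : 'M[C]_(k, l)) :
  adjmx (A *m B) = adjmx B *m adjmx A.
Proof.
apply/matrixP => i j; rewrite !mxE rmorph_sum; apply: eq_bigr => r _.
by rewrite !mxE rmorphM mulrC.
Qed.

Lemma adjmxD m k (A B : 'M[C]_(m, k)) : adjmx (A + B) = adjmx A + adjmx B.
Proof. by apply/matrixP => i j; rewrite !mxE rmorphD. Qed.

Lemma adjmx0 m k : adjmx (0 : 'M[C]_(m, k)) = 0.
Proof. by apply/matrixP => i j; rewrite !mxE rmorph0. Qed.

End Adjoint.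

Section Anticommutator.
Variables (R : comPzRingType) (N : nat).
Implicit Types (A B D : 'M[R]_N) (c : R).

Definition anticomm A B := A *m B + B *m A.

Lemma anticommC A B : anticomm A B = anticomm B A.
Proof. exact: addrC. Qed.

Lemma anticommDl A B D : anticomm (A + B) D = anticomm A D + anticomm B D.
Proof. by rewrite /anticomm mulmxDl mulmxDr addrACA. Qed.

Lemma anticommDr A B D : anticomm A (B + D) = anticomm A B + anticomm A D.
Proof. by rewrite anticommC anticommDl !(anticommC A). Qed.

Lemma anticommZl c A B : anticomm (c *: A) B = c *: anticomm A B.
Proof. by rewrite /anticomm scalerDr scalemxAl scalemxAr. Qed.

Lemma anticommZr c A B : anticomm A (c *: B) = c *: anticomm A B.
Proof. by rewrite anticommC anticommZl anticommC. Qed.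

Lemma anticommxx A : anticomm A A = A *m A *+ 2.
Proof. by rewrite mulr2n. Qed.

End Anticommutator.

Lemma adjmx_anticomm (C : numClosedFieldType) N (A B : 'M[C]_N) :
  adjmx (anticomm A B) = anticomm (adjmx A) (adjmx B).
Proof. by rewrite /anticomm adjmxD !adjmxM addrC. Qed.

Section JordanWigner.
Variables (C : numClosedFieldType) (n : nat).
Local Notation N := (2 ^ n)%N.
Local Notation a := (ann C n).
Local Notation ad j := (adjmx (ann C n j)).

Definition jw_sign j x : C := (-1) ^+ occ_below j x.

Lemma jw_sign_sqr j x : jw_sign j x * jw_sign j x = 1.
Proof. by rewrite -expr2 -exprM mulnC exprM sqrrN !expr1n. Qed.

Lemma ann_graph j : a j = graph_mx (fun x => occ x j) (fun x => x - 2 ^ j)%N (jw_sign j).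
Proof. by apply/matrixP => y x; rewrite !mxE. Qed.

Lemma adj_ann_graph j :
  ad j = graph_mx (fun x => ~~ occ x j) (fun x => x + 2 ^ j)%N (jw_sign j).
Proof.
apply/matrixP => y x; rewrite !mxE occ_subX_addX.
case: andP => [[xj0 /eqP ->]|]; last by rewrite conjC0.
by rewrite rmorph_sign -[LHS]/(jw_sign j (x + 2 ^ j)) /jw_sign occ_below_addX_le.
Qed.

Lemma subX_ord_lt j (x : 'I_N) : (x - 2 ^ j < N)%N.
Proof. exact: leq_ltn_trans (leq_subr _ _) (ltn_ord x). Qed.

Lemma addX_ord_lt j : (j < n)%N -> forall x : 'I_N, ~~ occ x j -> (x + 2 ^ j < N)%N.
Proof. by move=> lt_jn x; apply: occ_addX_ltn. Qed.

Lemma anticomm_ann j k : anticomm (a j) (a k) = 0.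
Proof.
wlog le_kj : j k / (k <= j)%N.
  by move=> W; case: (leqP k j) => [|/ltnW]; [exact: W | rewrite anticommC; exact: W].
apply/matrixP => y x; rewrite !ann_graph [LHS]mxE !mul_graph_mx;
  try by move=> ? _; apply: subX_ord_lt.
rewrite mxE; case: ltngtP le_kj => // [lt_kj _|-> _]; last first.
  by case xj: (occ x j); rewrite /= ?(negbTE (occ_subX xj)) addr0.
have [neq_jk neq_kj] : j != k /\ k != j by rewrite gtn_eqF ?ltn_eqF.
rewrite subnAC; case xj: (occ x j); case xk: (occ x k) => /=;
  rewrite ?occ_subX_neq ?xj ?xk ?addr0 //=.
case: (_ == _ :> nat); rewrite ?addr0 // /jw_sign.
(* The string of mode j changes parity according to whether mode k < j was
   emptied first, while that of mode k is never affected by mode j. *)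
rewrite (occ_below_subX_gt xk lt_kj) (occ_below_subX_le xj (ltnW lt_kj)) exprS.
ring.
Qed.

Lemma anticomm_adj_ann j k : anticomm (ad j) (ad k) = 0.
Proof. by rewrite -adjmx_anticomm anticomm_ann adjmx0. Qed.

Lemma anticomm_ann_adj j k : (k < n)%N -> anticomm (a j) (ad k) = (j == k)%:R%:M.
Proof.
move=> lt_kn; apply/matrixP => y x.
rewrite ann_graph adj_ann_graph [LHS]mxE !mul_graph_mx;
  try by [move=> ? _; apply: subX_ord_lt | exact: addX_ord_lt].
have [<-|neq_jk] := eqVneq j k.
  rewrite !mxE occ_addX addnK; case: (boolP (occ x j)) => xj /=.
    rewrite occ_subX // subnK ?occ_geX // add0r val_eqE; case: (y == x) => //=.
    by rewrite /jw_sign occ_below_subX_le // -/(jw_sign j x) jw_sign_sqr.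
  rewrite addr0 val_eqE; case: (y == x) => //=.
  by rewrite /jw_sign occ_below_addX_le // -/(jw_sign j x) jw_sign_sqr.
have neq_kj : k != j by rewrite eq_sym.
rewrite !mxE mul0rn; case: (boolP (occ x k)) => xk /=.
  by case: (boolP (occ x j)) => xj; rewrite /= ?add0r // occ_subX_neq // xk.
rewrite occ_addX_neq //; case: (boolP (occ x j)) => xj /=; last by rewrite addr0.
rewrite occ_subX_neq // xk -addnBAC ?occ_geX //.
case: (_ == _ :> nat); rewrite /= ?addr0 // /jw_sign.
case: (ltngtP k j) => [lt_kj|lt_jk|eq_kj]; last by rewrite eq_kj eqxx in neq_jk.
  rewrite (occ_below_addX_gt xk lt_kj) (occ_below_subX_le xj (ltnW lt_kj)) exprS.
  ring.
rewrite (occ_below_addX_le xk (ltnW lt_jk)) (occ_below_subX_gt xj lt_jk) exprS.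
ring.
Qed.

End JordanWigner.

Section Majorana.
Variables (C : numClosedFieldType) (n : nat).
Local Notation c := (@majorana C n).
Local Notation a := (ann C n).
Local Notation ad j := (adjmx (ann C n j)).

Definition majorana_ann_coef (p : nat) : C := if odd p then - 'i else 1.
Definition majorana_adj_coef (p : nat) : C := if odd p then 'i else 1.

Lemma majorana_ann (p : 'I_(2 * n)) :
  c p = majorana_ann_coef p *: a p./2 + majorana_adj_coef p *: ad p./2.
Proof.
rewrite /majorana /majorana_ann_coef /majorana_adj_coef.
by case: (odd p); rewrite ?scale1r // scalerBr !scaleNr opprK.
Qed.

Lemma half_ord_lt (p : 'I_(2 * n)) : (p./2 < n)%N.
Proof. by rewrite ltn_half_double -mul2n. Qed.

Lemma anticomm_majorana (p q : 'I_(2 * n)) :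
  anticomm (c p) (c q) = (2 * (p == q))%:R%:M.
Proof.
rewrite !majorana_ann !anticommDl !anticommDr !anticommZl !anticommZr.
rewrite anticomm_ann anticomm_adj_ann anticomm_ann_adj ?half_ord_lt //.
rewrite anticommC anticomm_ann_adj ?half_ord_lt // !scaler0 add0r addr0.
rewrite [q./2 == _]eq_sym !scalerA -scalerDl scale_scalar_mx; congr _%:M.
rewrite /majorana_ann_coef /majorana_adj_coef.
have [<-|neq_pq] := eqVneq p q.
  by rewrite eqxx; case: (odd p); rewrite /= ?mulNr ?mulrN -?expr2 ?sqrCi; ring.
rewrite muln0; case: eqP => [eq_half|_]; last by rewrite mulr0.
have : odd p != odd q.
  apply: contraNneq neq_pq => eq_odd; apply/eqP/val_inj.
  by rewrite -[val p]odd_double_half -[val q]odd_double_half eq_odd eq_half.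
by case: (odd p) (odd q) => [] [] //= _; ring.
Qed.

Lemma majorana_sqr (p : 'I_(2 * n)) : c p *m c p = 1%:M.
Proof.
apply: (@scalerI _ _ 2%:R); first by rewrite pnatr_eq0.
by rewrite scale_scalar_mx mulr1 scaler_nat -anticommxx anticomm_majorana eqxx.
Qed.

Lemma majorana_anticomm (p q : 'I_(2 * n)) : p != q -> c p *m c q = - (c q *m c p).
Proof.
move=> /negPf neq_pq; apply/eqP; rewrite -addr_eq0.
by have := anticomm_majorana p q; rewrite neq_pq /anticomm => ->; rewrite muln0 raddf0.
Qed.

End Majorana.

Lemma mulr_prod_update (R : pzRingType) (I : eqType) (r : seq I) (F G : I -> R) A i :
  uniq r -> i \in r -> (forall j, GRing.comm A (F j)) -> A * F i = G i ->
  (forall j, j != i -> G j = F j) -> A * \prod_(j <- r) F j = \prod_(j <- r) G j.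
Proof.
move=> + + AF AFi G_F; elim: r => [//|j r IHr] /= /andP[jr uniq_r].
rewrite !big_cons inE; have [eq_ij _|neq_ij /= ir] := eqVneq i j; first subst j.
  rewrite mulrA AFi; congr (_ * _); apply: eq_big_seq => l lr.
  by rewrite G_F //; apply: contraNneq jr => <-.
by rewrite mulrA AF -mulrA IHr // G_F // eq_sym.
Qed.

Definition toggle (I : finType) (a : {ffun I -> bool}) i : {ffun I -> bool} :=
  [ffun j => a j (+) (j == i)].

Lemma toggleK (I : finType) (i : I) : involutive (fun a => toggle a i).
Proof. by move=> a; apply/ffunP => j; rewrite !ffunE addbK. Qed.

Section CommutingInvolutions.
Variables (R : pzRingType) (I : finType) (x : I -> R).
Local Notation wt a := #|[pred i | (a : {ffun I -> bool}) i]|.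

Definition sel_prod (a : {ffun I -> bool}) := \prod_i (if a i then x i else 1).

Definition elem_sym k := \sum_(a : {ffun I -> bool} | wt a == k) sel_prod a.

Lemma card_toggle a i : wt (toggle a i) = if a i then (wt a).-1 else (wt a).+1.
Proof.
case ai: (a i).
  rewrite [in RHS](cardD1 i) inE ai add1n /=.
  by apply: eq_card => j; rewrite !inE ffunE; case: eqP => [->|]; rewrite ?ai ?addbF.
have := cardU1 i [pred j | a j]; rewrite !inE ai add1n => <-.
by apply: eq_card => j; rewrite !inE ffunE; case: eqP => [->|]; rewrite ?ai ?addbF.
Qed.

Lemma card_toggle_eq b k :
  #|[pred i | wt (toggle b i) == k]| =
  ((wt b == k.+1) * k.+1 + ((wt b).+1 == k) * (#|I| - wt b))%N.
Proof.
have wt_gt0 i : b i -> (0 < wt b)%N by move=> bi; apply/card_gt0P; exists i.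
have [eq_wt|neq_wt] := eqVneq (wt b) k.+1.
  rewrite eq_wt gtn_eqF // mul1n mul0n addn0 -eq_wt.
  apply: eq_card => i; rewrite !inE card_toggle eq_wt.
  by case: (b i); rewrite /= ?eqxx ?gtn_eqF.
rewrite mul0n add0n; have [eq_wt1|neq_wt1] := eqVneq (wt b).+1 k.
  rewrite mul1n -(cardC [pred i | b i]) addKn; apply: eq_card => i.
  rewrite !inE card_toggle -eq_wt1; case: (b i); last by rewrite eqxx.
  by rewrite ltn_eqF // ltnS leq_pred.
rewrite mul0n; apply: eq_card0 => i; rewrite !inE card_toggle.
case bi: (b i); last exact/negbTE.
by apply: contraNF neq_wt => /eqP <-; rewrite prednK ?(wt_gt0 i).
Qed.

Lemma elem_sym0 : elem_sym 0 = 1.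
Proof.
rewrite /elem_sym (big_pred1 [ffun=> false]) => [|a /=].
  by rewrite /sel_prod big1 // => i _; rewrite ffunE.
apply/eqP/eqP => [/card0_eq a0|->]; last by apply: eq_card0 => i; rewrite !inE ffunE.
by apply/ffunP => i; rewrite ffunE; apply/negbTE; have := a0 i; rewrite !inE => ->.
Qed.

Hypothesis x_sqr : forall i, x i * x i = 1.
Hypothesis x_comm : forall i j, x i * x j = x j * x i.

Lemma mul_sel_prod i a : x i * sel_prod a = sel_prod (toggle a i).
Proof.
apply: mulr_prod_update (index_enum_uniq I) (mem_index_enum i) _ _ _ => [j||j neq_ji].
- by rewrite /GRing.comm; case: (a j); rewrite ?mulr1 ?mul1r.
- by rewrite ffunE eqxx; case: (a i); rewrite /= ?mulr1.
- by rewrite ffunE (negbTE neq_ji) addbF.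
Qed.

Lemma commr_elem_sym k : GRing.comm (\sum_i x i) (elem_sym k).
Proof.
apply: commr_sum => a _; apply/commr_sym/commr_sum => i _.
apply/commr_sym/commr_prod => j _.
by case: (a j); [exact: x_comm | exact: commr1].
Qed.

Lemma sum_mul_elem_sym k :
  (\sum_i x i) * elem_sym k =
  elem_sym k.+1 *+ k.+1 + (if k is j.+1 then elem_sym j *+ (#|I| - j) else 0).
Proof.
have mul_elem_sym i : x i * elem_sym k = \sum_(b | wt (toggle b i) == k) sel_prod b.
  rewrite mulr_sumr (reindex_inj (inv_inj (toggleK i))) /=.
  by apply: eq_bigr => b _; rewrite mul_sel_prod toggleK.
rewrite mulr_suml (eq_bigr _ (fun i _ => mul_elem_sym i)).
rewrite (exchange_big_dep xpredT) //=.
under eq_bigr => b _ do rewrite sumr_const card_toggle_eq mulrnDr.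
rewrite big_split /= -sumrMnl; congr (_ + _).
  by rewrite [RHS]big_mkcond; apply: eq_bigr => b _; case: eqP; rewrite ?mul1n.
case: k mul_elem_sym => [|j] _; first by rewrite big1.
rewrite -sumrMnl [RHS]big_mkcond; apply: eq_bigr => b _.
by rewrite eqSS; case: eqP => [->|]; rewrite ?mul1n.
Qed.

End CommutingInvolutions.

Definition kernel_coef (F : numDomainType) (n k : nat) : F :=
  if odd k then 0 else (-1) ^+ k./2 * 'C(n, k./2)%:R.

Lemma kernel_coef_real (F : numDomainType) n k : kernel_coef F n k \is Num.real.
Proof.
rewrite /kernel_coef; case: (odd k); first exact: rpred0.
by rewrite rpredM ?rpredX ?rpredN ?rpred1 ?realn.
Qed.

Lemma kernel_coefSS (F : numDomainType) n k :
  kernel_coef F n k.+2 * k.+2%:R = - kernel_coef F n k * (2 * n - k)%:R.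
Proof.
rewrite /kernel_coef /= negbK; move: (odd_double_half k); set l := k./2.
case: (odd k) => [_|/= <-]; first by rewrite oppr0 !mul0r.
rewrite add0n -doubleS mul2n -doubleB mulNr -!mulrA -!natrM -!doubleMr.
by rewrite [(_ * l.+1)%N]mulnC mul_bin_left [(_ * (n - l))%N]mulnC exprS mulN1r mulNr.
Qed.

Section KernelOfInvolutionSum.
Variables (F : numFieldType) (N n : nat) (I : finType) (x : I -> 'M[F]_N).
Hypothesis x_sqr : forall i, x i * x i = 1.
Hypothesis x_comm : forall i j, x i * x j = x j * x i.
Hypothesis card_I : #|I| = (2 * n)%N.

Lemma elem_sym_kernel W : (\sum_i x i) * W = 0 ->
  forall k, elem_sym x k * W = kernel_coef F n k *: W.
Proof.
move=> kerW k.
suff [] : elem_sym x k * W = kernel_coef F n k *: W /\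
          elem_sym x k.+1 * W = kernel_coef F n k.+1 *: W by [].
elim: k => [|k [IHk IHk1]].
  have := sum_mul_elem_sym x_sqr x_comm 0; rewrite elem_sym0 mulr1 addr0 mulr1n => sym1.
  split; first by rewrite mul1r /kernel_coef /= bin0 mul1r scale1r.
  by rewrite -sym1 kerW /kernel_coef scale0r.
split=> //; apply: (@scalerI _ _ k.+2%:R); first by rewrite pnatr_eq0.
have := congr1 (fun M => M * W) (sum_mul_elem_sym x_sqr x_comm k.+1) => /=.
rewrite commr_elem_sym // -mulrA kerW mulr0 mulrDl !mulrnAl IHk card_I.
move/eqP; rewrite eq_sym addr_eq0 => /eqP.
rewrite !scaler_nat => ->; rewrite !scalerMnl -scaleNr; congr (_ *: W).
by rewrite -[_ *+ k.+2]mulr_natr -[_ *+ (2 * n - k)]mulr_natr kernel_coefSS mulNr.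
Qed.

End KernelOfInvolutionSum.

Section Tensor.
Variable R : comPzRingType.

Lemma tensmx1 m k : (1%:M : 'M[R]_m) *t (1%:M : 'M[R]_k) = 1%:M.
Proof.
apply/matrixP => i j.
case: (mxtens_indexP i) => i0 i1; case: (mxtens_indexP j) => j0 j1.
rewrite tensmxE !mxE (inj_eq (can_inj (@mxtens_indexK _ _))) xpair_eqE.
by case: (i0 == j0); case: (i1 == j1); rewrite /= ?mulr1 ?mulr0 ?mul0r.
Qed.

Lemma tensmxNN m k l r (A : 'M[R]_(m, k)) (B : 'M[R]_(l, r)) : (- A) *t (- B) = A *t B.
Proof. by apply/matrixP => i j; rewrite !mxE mulrNN. Qed.

Lemma tensmx_prod m k (I : Type) (r : seq I) (F : I -> 'M[R]_m) (G : I -> 'M[R]_k) :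
  (\prod_(i <- r) F i) *t (\prod_(i <- r) G i) = \prod_(i <- r) (F i *t G i).
Proof.
elim: r => [|i r IHr]; first by rewrite !big_nil tensmx1.
by rewrite !big_cons -IHr; exact: (esym (tensmx_mul _ _ _ _)).
Qed.

End Tensor.

Lemma mulmx_cV_eq0 (R : pzRingType) m n (A : 'M[R]_(m, n)) :
  (forall v : 'cV_n, A *m v = 0) -> A = 0.
Proof.
move=> Av0; apply/matrixP => i j; have := Av0 (delta_mx j 0).
by rewrite -colE => /matrixP/(_ i 0); rewrite !mxE.
Qed.

Section MajoranaSquares.
Variables (C : numClosedFieldType) (n : nat).
Local Notation X p := (@majorana C n p *t @majorana C n p).

Lemma tens_majorana_sqr p : X p * X p = 1.
Proof. by rewrite -[LHS]/(X p *m X p) tensmx_mul majorana_sqr tensmx1. Qed.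

Lemma tens_majorana_comm p q : X p * X q = X q * X p.
Proof.
rewrite -[LHS]/(X p *m X q) -[RHS]/(X q *m X p) !tensmx_mul.
by have [->//|neq_pq] := eqVneq p q; rewrite majorana_anticomm // tensmxNN.
Qed.

Lemma tens_cmono a : cmono C a *t cmono C a = sel_prod (fun p => X p) a.
Proof.
by rewrite /cmono tensmx_prod; apply: eq_bigr => p _; case: (a p); rewrite ?tensmx1.
Qed.

Lemma Lambda_mul_eq0 rho : range_in_kerLambda rho -> Lambda C n * rho = 0.
Proof.
move=> ker_rho; apply: mulmx_cV_eq0 => v.
by rewrite -[_ *m v]/((Lambda C n *m rho) *m v) -mulmxA ker_rho.
Qed.

End MajoranaSquares.

Theorem proposition2 (C : numClosedFieldType) (n : nat) :
  exists F : 'I_(2 * n).+1 -> C,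
    (forall k, F k \is Num.real) /\
    forall rho : 'M[C]_(2 ^ n * 2 ^ n),
      density rho -> range_in_kerLambda rho ->
      forall k : 'I_(2 * n).+1,
        \sum_(a : {ffun 'I_(2 * n) -> bool} | hweight a == k) rho_coef rho a a = F k.
Proof.
exists (fun k => (2 ^+ (2 * n))^-1 * kernel_coef C n k); split.
  by move=> k; rewrite rpredM ?kernel_coef_real // rpredV rpredX ?realn.
move=> rho [_ _ tr_rho] /Lambda_mul_eq0 ker_rho k.
rewrite /rho_coef -mulr_sumr; congr (_ * _).
rewrite -raddf_sum /= -mulmx_sumr mxtrace_mulC.
rewrite (eq_bigr _ (fun a _ => @tens_cmono C n a)) -/(elem_sym _ k).
have := elem_sym_kernel (@tens_majorana_sqr C n) (@tens_majorana_comm C n)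
  (card_ord (2 * n)) ker_rho k.
by rewrite -[_ * rho]/(_ *m rho) => ->; rewrite mxtraceZ tr_rho mulr1.
Qed.
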